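(* Let $k\ge 1$, $\tau=1000k$, $\rho=1-\frac{1}{10\tau}$, and let $g:\{0,1\}^n\to\{0,1\}$ be a $k$-term DNF. If $y^1\in\{0,1\}^n$ satisfies $g_{\le\tau}(y^1)=1$, then $T_\rho g(y^1)\ge 0.9$.
   Context: $g_{\le L}$ is the sub-DNF of $g$ consisting of terms with at most $L$ literals. For $x\in\{0,1\}^n$, $\mathbf{y}\sim N_\rho(x)$ means each bit independently has $\mathbf{y}_i=x_i$ with probability $\rho$ and $\mathbf{y}_i=1-x_i$ with probability $1-\rho$. The noise operator is $T_\rho g(x)=\mathbb{E}_{\mathbf{y}\sim N_\rho(x)}[g(\mathbf{y})]$. *)

From HB Require Import structures.
From mathcomp Require Import all_boot all_order all_algebra.
Set Implicit Arguments. Unset Strict Implicit. Unset Printing Implicit Defensive.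
Import Order.TTheory GRing.Theory Num.Theory.

Definition cube (n : nat) := {ffun 'I_n -> bool}.

(* A term (conjunction of literals) over n variables: for each variable,
   None = variable absent, Some b = literal "x_i = b" present. *)
Definition term (n : nat) := {ffun 'I_n -> option bool}.

Definition term_width n (t : term n) : nat := #|[pred i | t i != None]|.

Definition term_sat n (t : term n) (x : cube n) : bool :=
  [forall i, if t i is Some b then x i == b else true].

Definition dnf (n : nat) := seq (term n).

Definition dnf_eval n (g : dnf n) (x : cube n) : bool :=
  has (fun t => term_sat t x) g.

Definition dnf_le n (L : nat) (g : dnf n) : dnf n :=
  [seq t <- g | term_width t <= L].

Local Open Scope ring_scope.

(* Probability that y ~ N_rho(x) equals a given y. *)
Definition noise_prob (R : nzRingType) n (rho : R) (x y : cube n) : R :=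
  \prod_(i : 'I_n) (if y i == x i then rho else 1 - rho).

Definition noise_op (R : nzRingType) n (rho : R) (f : cube n -> R) (x : cube n) : R :=
  \sum_(y : cube n) noise_prob rho x y * f y.

(* A term t of g of width w <= tau that is satisfied by y1 survives the noise
   exactly when each of its w literals does, so T_rho [t](y1) = rho^w; as
   g >= [t] pointwise, T_rho g(y1) >= rho^w >= 1 - w/(10 tau) >= 9/10 by
   Bernoulli's inequality. *)
From HB Require Import structures.
From mathcomp Require Import all_boot all_order all_algebra.
From mathcomp Require Import ring lra.
Set Implicit Arguments. Unset Strict Implicit.
Import Order.TTheory GRing.Theory Num.Theory.
Local Open Scope ring_scope.

Lemma bernoulli_subrX (R : realDomainType) (e : R) (w : nat) :
  e <= 1 -> 1 - w%:R * e <= (1 - e) ^+ w.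
Proof.
move=> e_le1; elim: w => [|w IHw]; first by rewrite expr0 mul0r subr0.
have le_step : (1 - e) * (1 - w%:R * e) <= (1 - e) ^+ w.+1.
  by rewrite exprS; apply: ler_wpM2l => //; lra.
have w_ge0 : 0 <= (w%:R : R) by [].
apply: le_trans le_step; rewrite -natr1; nra.
Qed.

Lemma dnf_evalP n (g : dnf n) (x : cube n) :
  reflect (exists2 t, t \in g & term_sat t x) (dnf_eval g x).
Proof. exact: hasP. Qed.

Section NoiseOperator.
Variable R : comNzRingType.

Lemma natr_term_sat n (t : term n) (y : cube n) :
  (term_sat t y)%:R =
    \prod_i (if t i is Some c then ((y i == c)%:R : R) else 1).
Proof.
rewrite /term_sat; case: forallP => [sat_y | /forallP/forallPn[i unsat_i]].
  by rewrite big1 // => i _; have := sat_y i; case: (t i) => [c /eqP ->|]; rewrite ?eqxx.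
rewrite (bigD1 i) //=; move: unsat_i; case: (t i) => [c /negbTE -> | //].
by rewrite mul0r.
Qed.

(* Both the noise distribution and the indicator of [t] factor over the
   coordinates, so the expectation is a product of one-bit expectations. *)
Lemma noise_op_term n (rho : R) (t : term n) (x : cube n) :
  term_sat t x ->
  noise_op rho (fun y => (term_sat t y)%:R) x = rho ^+ term_width t.
Proof.
move=> /forallP sat_x.
pose F i (b : bool) := (if b == x i then rho else 1 - rho) *
  (if t i is Some c then ((b == c)%:R : R) else 1).
have -> : noise_op rho (fun y => (term_sat t y)%:R) x =
    \sum_(y : cube n) \prod_i F i (y i).
  by apply: eq_bigr => y _; rewrite natr_term_sat /noise_prob -big_split.
rewrite -bigA_distr_bigA /term_width -prodr_const [RHS]big_mkcond /=.
apply: eq_bigr => i _; rewrite big_bool /F inE; have := sat_x i.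
by case: (t i) => [c /eqP <- | _]; case: (x i) => /=; ring.
Qed.

End NoiseOperator.

Section NoiseMonotone.
Variables (R : numDomainType) (rho : R).
Hypotheses (rho_ge0 : 0 <= rho) (rho_le1 : rho <= 1).

Lemma noise_prob_ge0 n (x y : cube n) : 0 <= noise_prob rho x y.
Proof. by apply: prodr_ge0 => i _; case: ifP; rewrite ?subr_ge0. Qed.

Lemma ler_noise_op n (f h : cube n -> R) (x : cube n) :
  (forall y, f y <= h y) -> noise_op rho f x <= noise_op rho h x.
Proof.
by move=> le_fh; apply: ler_sum => y _; apply: ler_wpM2l; rewrite ?noise_prob_ge0.
Qed.

Lemma noise_op_dnf_ge n (g : dnf n) (t : term n) (x : cube n) :
  t \in g -> term_sat t x ->
  rho ^+ term_width t <= noise_op rho (fun y => (dnf_eval g y)%:R) x.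
Proof.
move=> t_in_g sat_x; rewrite -(noise_op_term rho sat_x).
apply: ler_noise_op => y; rewrite ler_nat; case sat_y: (term_sat t y) => //.
by rewrite lt0b; apply/dnf_evalP; exists t.
Qed.

End NoiseMonotone.

Lemma noise_rate_expr_ge (R : realFieldType) (tau : R) (w : nat) :
  1 <= tau -> w%:R <= tau -> 9 / 10 <= (1 - 1 / (10 * tau)) ^+ w.
Proof.
move=> tau_ge1 w_le_tau; set e := 1 / (10 * tau).
have e_tau : e * (10 * tau) = 1 by rewrite /e mul1r mulVf // gt_eqF //; lra.
have e_ge0 : 0 <= e by rewrite divr_ge0 //; lra.
have w_ge0 : 0 <= (w%:R : R) by [].
have e_le1 : e <= 1 by nra.
apply: le_trans (bernoulli_subrX _ e_le1); nra.
Qed.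

Theorem claim6p4 (R : realFieldType) (n k : nat) (g : dnf n) (y1 : cube n) :
  (1 <= k)%N ->
  size g = k ->
  dnf_eval (dnf_le (1000 * k) g) y1 ->
  let tau : R := (1000 * k)%:R in
  let rho : R := 1 - 1 / (10 * tau) in
  9 / 10 <= noise_op rho (fun y => (dnf_eval g y)%:R) y1.
Proof.
(* Only the satisfied short term matters; the number of terms enters through tau alone. *)
move=> k_ge1 _ /dnf_evalP[t]; rewrite mem_filter => /andP[width_le t_in_g] sat_y1.
cbv zeta; set tau : R := (1000 * k)%:R.
have tau_ge1 : 1 <= tau by rewrite ler1n muln_gt0.
have flip_ge0 : 0 <= 1 / (10 * tau) by rewrite divr_ge0 //; lra.
have flip_le1 : 1 / (10 * tau) <= 1 by rewrite ler_pdivrMr ?mul1r; lra.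
apply: le_trans (noise_rate_expr_ge tau_ge1 _) (noise_op_dnf_ge _ _ t_in_g sat_y1).
- by rewrite ler_nat.
- lra.
- lra.
Qed.
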